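(* Let $n\ge 4$ and let $D_n$ be the tree on vertex set $\{1,\ldots,n\}$ with edges $\{1,3\}$, $\{2,3\}$ and $\{i,i+1\}$ for $3\le i\le n-1$, with adjacency matrix $A$; let $W(D_n)=[e,Ae,\ldots,A^{n-1}e]$ with $e$ the all-ones vector of length $n$, and let $\hat W(D_n)$ be obtained from $W(D_n)$ by deleting the first row and the last column. Then $W(D_n)$ and the $n\times n$ matrix $\begin{pmatrix}0&0\\ \hat W(D_n)&0\end{pmatrix}$ (first row zero, last column zero) have the same Smith normal form. In particular $\operatorname{rank}W(D_n)=\operatorname{rank}\hat W(D_n)$.
   Context: The Smith normal form of an integral square matrix $M$ is the diagonal matrix $\operatorname{diag}[d_1,\ldots,d_n]$ with nonnegative integers $d_i$, $d_i\mid d_{i+1}$, such that $UMV=\operatorname{diag}[d_1,\ldots,d_n]$ for some unimodular integer matrices $U,V$. *)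

From HB Require Import structures.
From mathcomp Require Import all_boot all_order all_algebra.
Set Implicit Arguments. Unset Strict Implicit. Unset Printing Implicit Defensive.
Import Order.TTheory GRing.Theory Num.Theory.
Local Open Scope ring_scope.

(* Vertices 1..n of the paper are the ordinals 0..n-1 (vertex k+1 <-> k). *)
Definition Dn_edge (i j : nat) : bool :=
  [|| (i == 0%N) && (j == 2%N), (i == 2%N) && (j == 0%N),
      (i == 1%N) && (j == 2%N), (i == 2%N) && (j == 1%N),
      (2 <= i)%N && (j == i.+1) | (2 <= j)%N && (i == j.+1)].

Definition Dn_adj (n : nat) : 'M[int]_n :=
  \matrix_(i < n, j < n) (Dn_edge i j)%:R.

Definition ones (n : nat) : 'cV[int]_n := const_mx 1.

Definition WDn (n : nat) : 'M[int]_n :=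
  \matrix_(i < n, j < n) ((Dn_adj n ^+ j) *m ones n) i 0.

Definition WDn_at (n : nat) (i j : nat) : int :=
  match @insub nat (fun k => (k < n)%N) 'I_n i,
        @insub nat (fun k => (k < n)%N) 'I_n j with
  | Some i', Some j' => WDn n i' j'
  | _, _ => 0
  end.

Definition hatWDn (n : nat) : 'M[int]_(n.-1) :=
  \matrix_(i < n.-1, j < n.-1) WDn_at n i.+1 j.

Definition hatWDn_at (n : nat) (i j : nat) : int :=
  match @insub nat (fun k => (k < n.-1)%N) 'I_n.-1 i,
        @insub nat (fun k => (k < n.-1)%N) 'I_n.-1 j with
  | Some i', Some j' => hatWDn n i' j'
  | _, _ => 0
  end.

Definition borderedWDn (n : nat) : 'M[int]_n :=
  \matrix_(i < n, j < n)
    (if (i != 0%N :> nat) && (j != n.-1 :> nat)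
     then hatWDn_at n i.-1 j else 0).

Definition unimodular (n : nat) (U : 'M[int]_n) : Prop := U \in unitmx.

Definition is_Smith_normal_form (n : nat) (M : 'M[int]_n) (d : seq int) : Prop :=
  [/\ size d = n,
      all (fun x => 0 <= x) d,
      (forall k, (k.+1 < n)%N -> (d`_k %| d`_k.+1)%Z) &
      exists U V : 'M[int]_n, [/\ unimodular U, unimodular V &
        U *m M *m V = \matrix_(i < n, j < n) (d`_i *+ (i == j :> nat))]].

Definition int_rank (m n : nat) (M : 'M[int]_(m, n)) : nat :=
  \rank (map_mx (intr : int -> rat) M).

(* Vertices 1 and 2 of D_n are twins, so the first two rows of the adjacency
   matrix A coincide.  Hence A maps Z^n into the lattice S of vectors whose
   first two entries agree; S is free of rank n-1 and contains e, so every
   Krylov vector A^k e lies in S.  This gives the two facts behind the lemma: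
   the first two rows of W(D_n) are equal, and Cayley-Hamilton for the
   (n-1) x (n-1) matrix B of A restricted to S yields W(D_n) c = 0, where c
   lists the coefficients of the monic characteristic polynomial of B, so that
   its last entry is 1.  Subtracting row 2 from row 1 and replacing the last
   column by W(D_n) c are unimodular operations turning W(D_n) into
   [[0, 0], [hat W(D_n), 0]]. *)

From mathcomp Require Import all_boot all_order all_algebra.
Set Implicit Arguments. Unset Strict Implicit. Unset Printing Implicit Defensive.
Import Order.TTheory GRing.Theory Num.Theory.
Local Open Scope ring_scope.

Section Krylov.
Variable R : comNzRingType.

Definition krylov_mx n m (A : 'M[R]_n) (v : 'cV_n) : 'M_(n, m) :=
  \matrix_(i, j) (A ^+ j *m v) i 0.

Lemma mulmx_exp_intertwine n1 n2 (A : 'M[R]_n1) (B : 'M[R]_n2) P k :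
  A *m P = P *m B -> A ^+ k *m P = P *m B ^+ k.
Proof.
move=> AP; elim: k => [|k IHk]; first by rewrite !expr0 mul1mx mulmx1.
by rewrite !exprSr -!mulmxE -mulmxA AP !mulmxA IHk.
Qed.

Lemma krylov_mx_intertwine n1 n2 m (A : 'M[R]_n1) (B : 'M[R]_n2) P v :
  A *m P = P *m B -> krylov_mx m A (P *m v) = P *m krylov_mx m B v.
Proof.
move=> AP; apply/matrixP => i j.
rewrite mxE mulmxA (mulmx_exp_intertwine _ AP) -mulmxA !mxE.
by apply: eq_bigr => k _; rewrite /krylov_mx mxE.
Qed.

Definition char_poly_col n (B : 'M[R]_n) : 'cV_n.+1 := \col_i (char_poly B)`_i.

Lemma char_poly_col_max n (B : 'M[R]_n) : char_poly_col B ord_max 0 = 1.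
Proof.
by have /monicP := char_poly_monic B; rewrite lead_coefE size_char_poly mxE.
Qed.

Lemma krylov_mx_char_poly n (B : 'M[R]_n.+1) v :
  krylov_mx n.+2 B v *m char_poly_col B = 0.
Proof.
have CH : \sum_(k < n.+2) (char_poly B)`_k *: B ^+ k = 0.
  rewrite -[RHS](Cayley_Hamilton B) -{2}(coefK (char_poly B)) poly_def.
  rewrite size_char_poly linear_sum; apply: eq_bigr => k _.
  by rewrite linearZ /= rmorphXn /= horner_mx_X.
apply/matrixP => i j; rewrite ord1 !mxE.
have := congr1 (fun M => (M *m v) i 0) CH.
rewrite mulmx_suml mul0mx summxE mxE => CHv.
by rewrite -[RHS]CHv; apply: eq_bigr => k _; rewrite -scalemxAl !mxE mulrC.
Qed.

End Krylov.

Section TwinRows.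
Variables (R : comNzRingType) (m : nat).
Local Notation i1 := (lift ord0 (ord0 : 'I_m.+1)).

Definition twin_merge (i : 'I_m.+2) : 'I_m.+1 := odflt ord0 (unlift ord0 i).

(* Maps R^(m+1) onto the vectors whose first two entries agree, by
   duplicating the first coordinate. *)
Definition twin_merge_mx : 'M[R]_(m.+2, m.+1) := rowsub twin_merge 1%:M.

Lemma lift_twin_merge i :
  lift ord0 (twin_merge i) = if i == ord0 then i1 else i.
Proof. by rewrite /twin_merge; case: unliftP => [k|] -> //=. Qed.

Lemma row_twin_merge_mx : row ord0 twin_merge_mx = row i1 twin_merge_mx.
Proof. by rewrite !row_rowsub /twin_merge unlift_none liftK. Qed.

Lemma twin_merge_mxK k (M : 'M[R]_(m.+2, k)) :
  row ord0 M = row i1 M -> twin_merge_mx *m rowsub (lift ord0) M = M.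
Proof.
move=> M01; rewrite mul_rowsub_mx mul1mx -rowsub_comp.
apply/row_matrixP => i; rewrite row_rowsub /= lift_twin_merge.
by case: eqP => [->|].
Qed.

Variables (A : 'M[R]_m.+2) (v : 'cV[R]_m.+2).
Hypotheses (A01 : row ord0 A = row i1 A) (v01 : row ord0 v = row i1 v).

(* The matrix of [A] restricted to the image of [twin_merge_mx]. *)
Let B := rowsub (lift ord0) (A *m twin_merge_mx).

Lemma krylov_mx_twin_factor :
  krylov_mx m.+2 A v = twin_merge_mx *m krylov_mx m.+2 B (rowsub (lift ord0) v).
Proof.
rewrite -(krylov_mx_intertwine _ (A := A)) ?twin_merge_mxK //.
by rewrite !row_mul A01.
Qed.

Lemma krylov_mx_twin_rows :
  row ord0 (krylov_mx m.+2 A v) = row i1 (krylov_mx m.+2 A v).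
Proof. by rewrite krylov_mx_twin_factor !row_mul row_twin_merge_mx. Qed.

Lemma krylov_mx_twin_relation :
  exists2 c : 'cV_m.+2, c ord_max 0 = 1 & krylov_mx m.+2 A v *m c = 0.
Proof.
exists (char_poly_col B); first exact: char_poly_col_max.
by rewrite krylov_mx_twin_factor -mulmxA krylov_mx_char_poly mulmx0.
Qed.

End TwinRows.

Lemma sum_delta (R : pzSemiRingType) n (F : 'I_n -> R) i0 :
  \sum_i (i == i0)%:R * F i = F i0.
Proof.
by rewrite (bigD1 i0) //= eqxx mul1r big1 ?addr0 // => i /negPf->; rewrite mul0r.
Qed.

Section Reduction.
Variable R : comUnitRingType.

Section ZeroRow.
Variables (m : nat) (i0 j0 : 'I_m).
Hypothesis i0j0 : i0 != j0.

Definition row_reduce_mx : 'M[R]_m := 1%:M - delta_mx i0 j0.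

Lemma row_reduce_mx_unit : row_reduce_mx \in unitmx.
Proof.
suff /mulmx1_unit[] : row_reduce_mx *m (1%:M + delta_mx i0 j0) = 1%:M by [].
rewrite mulmxBl mul1mx mulmxDr mulmx1 mul_delta_mx_0 1?eq_sym //.
by rewrite addr0 addrK.
Qed.

Lemma mul_row_reduce_mx k (M : 'M[R]_(m, k)) : row i0 M = row j0 M ->
  row_reduce_mx *m M = \matrix_(i, j) (if i == i0 then 0 else M i j).
Proof.
move=> eqM; apply/matrixP => i j; rewrite mulmxBl mul1mx !mxE.
under eq_bigr => l _ do rewrite mxE.
case: eqP => [->|_]; last by rewrite big1 ?subr0 // => l _; rewrite mul0r.
by move/rowP/(_ j): eqM; rewrite !mxE sum_delta => ->; rewrite subrr.
Qed.

End ZeroRow.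

Section ZeroLastColumn.
Variables (m : nat) (c : 'cV[R]_m.+1).

Definition col_reduce_mx : 'M[R]_m.+1 :=
  \matrix_(i, j) (if j == ord_max then c i 0 else (i == j)%:R).

Lemma col_reduce_mx_unit : c ord_max 0 = 1 -> col_reduce_mx \in unitmx.
Proof.
move=> c1; rewrite unitmxE -det_tr det_trig.
  rewrite big1 ?unitr1 // => i _; rewrite !mxE eqxx.
  by case: eqP => // ->.
apply/forallP => i; apply/forallP => j; apply/implyP => ij; rewrite !mxE.
rewrite -!(inj_eq val_inj) /= (gtn_eqF ij).
by rewrite (ltn_eqF (leq_trans ij (leq_ord j))).
Qed.

Lemma mul_col_reduce_mx k (M : 'M[R]_(k, m.+1)) : M *m c = 0 ->
  M *m col_reduce_mx = \matrix_(i, j) (if j == ord_max then 0 else M i j).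
Proof.
move=> Mc; apply/matrixP => i j; rewrite !mxE.
under eq_bigr => l _ do rewrite mxE.
case: eqP => _; first by move/matrixP/(_ i 0): Mc; rewrite !mxE.
by under eq_bigr => l _ do rewrite mulrC; rewrite sum_delta.
Qed.

End ZeroLastColumn.

Lemma krylov_mx_twin_equiv m (A : 'M[R]_m.+2) v :
    row ord0 A = row (lift ord0 ord0) A -> row ord0 v = row (lift ord0 ord0) v ->
  exists U V, [/\ U \in unitmx, V \in unitmx &
    U *m krylov_mx m.+2 A v *m V = \matrix_(i, j)
      (if (i == ord0) || (j == ord_max) then 0 else krylov_mx m.+2 A v i j)].
Proof.
move=> A01 v01.
have [c c1 Kc] := krylov_mx_twin_relation A01 v01.
exists (row_reduce_mx ord0 (lift ord0 ord0)), (col_reduce_mx c); split.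
- exact/row_reduce_mx_unit/neq_lift.
- exact: col_reduce_mx_unit.
rewrite -mulmxA mul_row_reduce_mx; last by rewrite !row_mul krylov_mx_twin_rows.
rewrite mul_col_reduce_mx //; apply/matrixP => i j; rewrite !mxE.
by case: (i == ord0); case: (j == ord_max).
Qed.

End Reduction.

Lemma Smith_normal_form_mulmx n (M U V : 'M[int]_n) d :
  unimodular U -> unimodular V -> is_Smith_normal_form M d ->
  is_Smith_normal_form (U *m M *m V) d.
Proof.
rewrite /unimodular => uU uV [sz d_ge0 d_dvd [U0 [V0 [uU0 uV0 defD]]]].
split=> //; exists (U0 *m invmx U), (invmx V *m V0); split.
- by rewrite /unimodular unitmx_mul unitmx_inv uU0.
- by rewrite /unimodular unitmx_mul unitmx_inv uV0 andbT.
by rewrite -!mulmxA mulKmx // mulKVmx // !mulmxA.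
Qed.

Lemma Smith_normal_form_exists n (M : 'M[int]_n) :
  exists d, is_Smith_normal_form M d.
Proof.
have [L uL [R uR [d d_dvd defM]]] := int_Smith_normal_form M.
pose s : 'rV[int]_n := \row_i (-1) ^+ (d`_i < 0)%R.
have ss : diag_mx s *m diag_mx s = 1%:M.
  apply/matrixP => i j; rewrite mul_diag_mx !mxE.
  by rewrite mulrnAr -signr_addb addbb.
have us : diag_mx s \in unitmx by case: (mulmx1_unit ss).
pose e := mkseq (fun i => `|d`_i|%:Z) n.
exists e; split.
- by rewrite size_mkseq.
- by apply/allP => x /mapP[i _ ->].
- move=> k k_lt; rewrite !nth_mkseq ?(ltnW k_lt) // dvdzE /=.
  have [k_d|d_k] := ltnP k.+1 (size d); first exact: (sortedP 0 d_dvd).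
  by rewrite (nth_default 0 d_k) dvdn0.
exists (invmx (L *m diag_mx s)), (invmx R); split.
- by rewrite /unimodular unitmx_inv unitmx_mul uL.
- by rewrite /unimodular unitmx_inv.
have defD : \matrix_(i < n, j < n) (d`_i *+ (i == j :> nat)) =
            diag_mx s *m \matrix_(i, j) (e`_i *+ (i == j :> nat)).
  apply/matrixP => i j; rewrite mul_diag_mx !mxE nth_mkseq //.
  by rewrite mulrnAr abszE -numEsign.
by rewrite defM defD -!mulmxA mulmxV // mulmx1 (mulmxA L) mulKmx // unitmx_mul uL.
Qed.

Lemma int_rank_mul_unitmx m n (U : 'M[int]_m) (M : 'M[int]_(m, n)) V :
  U \in unitmx -> V \in unitmx -> int_rank (U *m M *m V) = int_rank M.
Proof.
have map_unit k (X : 'M[int]_k) : X \in unitmx -> map_mx intr X \in unitmx.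
  by rewrite !unitmxE det_map_mx; apply: rmorph_unit.
move=> uU uV; rewrite /int_rank !map_mxM mxrankMfree ?row_free_unit ?map_unit //.
by rewrite eqmxMfull // row_full_unit map_unit.
Qed.

Lemma mxrank_rowsub_eq (F : fieldType) m1 m2 n (f : 'I_m2 -> 'I_m1)
    (A : 'M[F]_(m1, n)) :
  (forall i j, i \notin codom f -> A i j = 0) -> \rank (rowsub f A) = \rank A.
Proof.
move=> A0; apply/eqP; rewrite eqn_leq mxrankS ?rowsub_sub //=.
apply/mxrankS/row_subP => i; have [/codomP[k ->]|fi] := boolP (i \in codom f).
  by rewrite -row_rowsub row_sub.
have -> : row i A = 0 by apply/rowP => j; rewrite !mxE A0.
exact: sub0mx.
Qed.

Lemma mxrank_mxsub_eq (F : fieldType) m1 m2 n1 n2 (f : 'I_m2 -> 'I_m1)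
    (g : 'I_n2 -> 'I_n1) (A : 'M[F]_(m1, n1)) :
    (forall i j, i \notin codom f -> A i j = 0) ->
    (forall i j, j \notin codom g -> A i j = 0) ->
  \rank (mxsub f g A) = \rank A.
Proof.
move=> Af Ag; rewrite mxsubrc mxrank_rowsub_eq => [|i j fi]; last first.
  by rewrite mxE Af.
rewrite -mxrank_tr -[RHS]mxrank_tr trmx_mxsub mxrank_rowsub_eq // => i j gi.
by rewrite mxE Ag.
Qed.

Lemma notin_codom_lift n (h : 'I_n.+1) i : i \notin codom (lift h) -> i = h.
Proof. by case: (unliftP h i) => [k ->|//]; rewrite codom_f. Qed.

Section Dn.
Variable p : nat.
Local Notation n := p.+2.

Lemma Dn_adj_twin_rows : row ord0 (Dn_adj n) = row (lift ord0 ord0) (Dn_adj n).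
Proof. by apply/rowP => -[[|[|[|j]]] ?]; rewrite !mxE. Qed.

Lemma WDn_atE (i j : 'I_n) : WDn_at n i j = WDn n i j.
Proof. by rewrite /WDn_at !valK. Qed.

Lemma hatWDn_atE (i j : 'I_n.-1) : hatWDn_at n i j = hatWDn n i j.
Proof. by rewrite /hatWDn_at !valK. Qed.

Lemma borderedWDnE : borderedWDn n =
  \matrix_(i, j) (if (i == ord0) || (j == ord_max) then 0 else WDn n i j).
Proof.
apply/matrixP => i j; rewrite [LHS]mxE [RHS]mxE.
case: (unliftP ord0 i) => [k ->|->] //=; case: (unliftP ord_max j) => [l ->|->].
  have /negPf-> : lift ord_max l != ord_max by rewrite eq_sym neq_lift.
  rewrite lift_max neq_ltn ltn_ord add0n hatWDn_atE mxE.
  by rewrite -(lift0 k) -(lift_max l) WDn_atE.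
by rewrite eqxx /= eqxx.
Qed.

Lemma hatWDn_mxsub : hatWDn n = mxsub (lift ord0) (lift ord_max) (borderedWDn n).
Proof.
apply/matrixP => k l; rewrite [LHS]mxE [RHS]mxE borderedWDnE [RHS]mxE.
rewrite !(eq_sym (lift _ _)) !(negPf (neq_lift _ _)) /=.
by rewrite -(lift0 k) -(lift_max l) WDn_atE.
Qed.

Lemma int_rank_hatWDn : int_rank (hatWDn n) = int_rank (borderedWDn n).
Proof.
rewrite hatWDn_mxsub /int_rank map_mxsub.
by apply: mxrank_mxsub_eq => i j /notin_codom_lift->;
  rewrite !mxE /= ?eqxx ?andbF.
Qed.

End Dn.

Theorem lemma4p4 (n : nat) (hn : (4 <= n)%N) :
  (exists d : seq int,
      is_Smith_normal_form (WDn n) d /\ is_Smith_normal_form (borderedWDn n) d)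
  /\ int_rank (WDn n) = int_rank (hatWDn n).
Proof.
case: n hn => [|[|p]] // _.
have ones01 : row ord0 (ones p.+2) = row (lift ord0 ord0) (ones p.+2).
  by rewrite !row_const.
have [U [V [uU uV]]] := krylov_mx_twin_equiv (Dn_adj_twin_rows p) ones01.
rewrite -/(WDn p.+2) -borderedWDnE => UWV.
have [d Wd] := Smith_normal_form_exists (WDn p.+2).
split; first by exists d; rewrite -UWV; split=> //; exact: Smith_normal_form_mulmx.
by rewrite int_rank_hatWDn -UWV int_rank_mul_unitmx.
Qed.
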